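(* Let $\Gamma=(V,\nu,\mu)$ be a fuzzy graph on $n$ vertices. Then $$\sigma^*(\Gamma)\le\frac{(n-1)^2\,\bigl(2\,\mathrm{ew}(\Gamma)\bigr)^2}{n^3}.$$
   Context: A fuzzy graph $\Gamma=(V,\nu,\mu)$ consists of a finite vertex set $V$ with $|V|=n\ge1$, a map $\nu:V\to[0,1]$, and a symmetric map $\mu:V\times V\to[0,1]$ with $\mu(u,v)\le\min(\nu(u),\nu(v))$. The fuzzy degree is $d_\Gamma(v)=\sum_{u\ne v}\mu(v,u)$, the fuzzy size is $\mathrm{ew}(\Gamma)=\sum_{\{u,v\},u\ne v}\mu(u,v)$, $\lambda=2\,\mathrm{ew}(\Gamma)/n$, and the fuzzy sigma index is $\sigma^*(\Gamma)=\frac1n\sum_{v}(d_\Gamma(v)-\lambda)^2$. *)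

From HB Require Import structures.
From mathcomp Require Import all_boot all_order all_algebra.
Set Implicit Arguments. Unset Strict Implicit. Unset Printing Implicit Defensive.
Import Order.TTheory GRing.Theory Num.Theory.
Local Open Scope ring_scope.

Definition is_fuzzy_graph (R : realFieldType) (V : finType)
    (nu : V -> R) (mu : V -> V -> R) : Prop :=
  [/\ forall v, 0 <= nu v <= 1,
      forall u v, 0 <= mu u v <= 1,
      forall u v, mu u v = mu v u &
      forall u v, mu u v <= Num.min (nu u) (nu v)].

Definition fdeg (R : realFieldType) (V : finType) (mu : V -> V -> R) (v : V) : R :=
  \sum_(u | u != v) mu v u.

(* fuzzy size ew = sum over unordered pairs {u,v}, u <> v, of mu(u,v):
   each unordered pair counted once, via a pair (u,v) with u < v in enum order. *)
Definition ew (R : realFieldType) (V : finType) (mu : V -> V -> R) : R :=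
  \sum_(p : V * V | (enum_rank p.1 < enum_rank p.2)%N) mu p.1 p.2.

Definition flambda (R : realFieldType) (V : finType) (mu : V -> V -> R) : R :=
  2 * ew mu / #|V|%:R.

Definition fsigma_star (R : realFieldType) (V : finType) (mu : V -> V -> R) : R :=
  (\sum_v (fdeg mu v - flambda mu) ^+ 2) / #|V|%:R.

From mathcomp Require Import all_boot all_order all_algebra.
From mathcomp Require Import ring lra.
Set Implicit Arguments.
Unset Strict Implicit.
Unset Printing Implicit Defensive.

Import Order.TTheory GRing.Theory Num.Theory.
Local Open Scope ring_scope.

(* With [s] the sum of the degrees, [s = 2 ew] by the handshake lemma, and no
   degree exceeds [s / 2], since every edge at [v] is also counted in the degree
   of its other end.  Hence [\sum_v d(v) ^+ 2 <= (s / 2) \sum_v d(v) = s ^+ 2 / 2],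
   and the variance [\sum_v d(v) ^+ 2 / n - s ^+ 2 / n ^+ 2] is then at most
   [(n - 1) ^+ 2 s ^+ 2 / n ^+ 3] because [n ^+ 2 / 2 <= (n - 1) ^+ 2 + n]. *)

Section Variance.
Variables (R : realFieldType) (I : finType) (x : I -> R).

Lemma sum_sqr_sub_mean : (0 < #|I|)%N ->
  \sum_i (x i - (\sum_j x j) / #|I|%:R) ^+ 2 =
  \sum_i x i ^+ 2 - (\sum_i x i) ^+ 2 / #|I|%:R.
Proof.
move=> I_gt0; set s := \sum_j x j; set n : R := #|I|%:R.
have n_neq0 : n != 0 by rewrite pnatr_eq0 -lt0n.
under eq_bigr => i _ do rewrite sqrrB.
rewrite !big_split /= sumrN sumrMnl -mulr_suml sumr_const -/s.
rewrite (eq_card (B := I)) // -mulr_natr -/n.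
by field.
Qed.

Lemma sum_sqr_le_half_sqr_sum : (forall i, 0 <= x i) ->
  (forall i, 2 * x i <= \sum_j x j) ->
  2 * \sum_i x i ^+ 2 <= (\sum_i x i) ^+ 2.
Proof.
move=> x_ge0 x_le_half; rewrite mulr_sumr expr2 mulr_suml.
apply: ler_sum => i _; rewrite expr2 mulrCA.
exact: ler_wpM2l.
Qed.

Lemma variance_le_sqr_sum : (0 < #|I|)%N -> (forall i, 0 <= x i) ->
  (forall i, 2 * x i <= \sum_j x j) ->
  (\sum_i (x i - (\sum_j x j) / #|I|%:R) ^+ 2) / #|I|%:R <=
  (#|I|%:R - 1) ^+ 2 * (\sum_i x i) ^+ 2 / #|I|%:R ^+ 3.
Proof.
move=> I_gt0 x_ge0 x_le_half; rewrite sum_sqr_sub_mean //.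
have S_le := sum_sqr_le_half_sqr_sum x_ge0 x_le_half.
have n_ge1 : 1 <= #|I|%:R :> R by rewrite ler1n.
set n : R := #|I|%:R in n_ge1 *.
set S := \sum_i x i ^+ 2 in S_le *; set s := \sum_i x i in S_le *.
have n_gt0 : 0 < n by lra.
have n_neq0 : n != 0 by rewrite gt_eqF.
rewrite -(ler_pM2r (exprn_gt0 3 n_gt0)).
have -> : (S - s ^+ 2 / n) / n * n ^+ 3 = S * n ^+ 2 - s ^+ 2 * n by field.
have -> : (n - 1) ^+ 2 * s ^+ 2 / n ^+ 3 * n ^+ 3 = (n - 1) ^+ 2 * s ^+ 2.
  by field.
have : 2 * S * n ^+ 2 <= s ^+ 2 * n ^+ 2 by rewrite ler_wpM2r ?sqr_ge0.
have : 0 <= s ^+ 2 * ((n - 1) ^+ 2 + 1) by rewrite mulr_ge0 ?addr_ge0 ?sqr_ge0.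
nra.
Qed.

End Variance.

Lemma neq_enum_rank (T : finType) (a b : T) :
  (a != b) = (enum_rank a < enum_rank b)%N || (enum_rank b < enum_rank a)%N.
Proof. by rewrite -(inj_eq enum_rank_inj) -val_eqE neq_ltn. Qed.

Section FuzzyDegree.
Variables (R : realFieldType) (V : finType) (mu : V -> V -> R).
Hypothesis mu_sym : forall u v, mu u v = mu v u.

Lemma sum_fdeg : \sum_v fdeg mu v = 2 * ew mu.
Proof.
rewrite /fdeg /ew (pair_big_dep xpredT (fun v u => u != v)) /=.
rewrite (bigID (fun p : V * V => enum_rank p.1 < enum_rank p.2)%N) /=.
rewrite mulr_natl mulr2n; congr (_ + _).
  by apply: eq_bigl => -[a b] /=; rewrite neq_enum_rank; case: ltngtP.
rewrite (reindex_inj (h := fun p : V * V => (p.2, p.1))) /=; last first.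
  by move=> [a b] [c d] [-> ->].
apply: eq_big => [[a b] /=|[a b] _]; last exact: mu_sym.
by rewrite neq_enum_rank; case: ltngtP.
Qed.

Hypothesis mu_ge0 : forall u v, 0 <= mu u v.

Lemma fdeg_ge0 v : 0 <= fdeg mu v.
Proof. exact: sumr_ge0. Qed.

Lemma fdeg_le_half_sum v : 2 * fdeg mu v <= \sum_u fdeg mu u.
Proof.
rewrite (bigD1 v) //= mulr_natl mulr2n lerD2l.
apply: ler_sum => u uv; rewrite /fdeg (bigD1 v) 1?eq_sym //= mu_sym lerDl.
exact: sumr_ge0.
Qed.

End FuzzyDegree.

Theorem theorem2p8 (R : realFieldType) (V : finType) (nu : V -> R) (mu : V -> V -> R) :
  (0 < #|V|)%N ->
  is_fuzzy_graph nu mu ->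
  fsigma_star mu <=
    (#|V|%:R - 1) ^+ 2 * (2 * ew mu) ^+ 2 / (#|V|%:R ^+ 3).
Proof.
move=> V_gt0 [_ mu01 mu_sym _].
have mu_ge0 u v : 0 <= mu u v by case/andP: (mu01 u v).
rewrite /fsigma_star /flambda -sum_fdeg //.
exact: variance_le_sqr_sum V_gt0 (fdeg_ge0 mu_ge0) (fdeg_le_half_sum mu_sym mu_ge0).
Qed.
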